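(* Let $\mathrm{tHC}$ be the twisted associative algebra generated by $S_t$-invariant elements $\mathsf m^{2p}_{\underline t}$ of arity $t\geqslant1$ and homological degree $2p$, for all $t\geqslant1$ and $p\geqslant0$, with $\overline{\mathsf m}_I=\sum_{p\geqslant0}\mathsf m^{2p}_I$, subject to the relations \[ \sum_{\substack{\underline n=I\sqcup J\\ i\in I,\ j\in J}}\overline{\mathsf m}_I\overline{\mathsf m}_J=\sum_{\substack{\underline n=I\sqcup J\\ i\in I,\ j\in J}}\overline{\mathsf m}_J\overline{\mathsf m}_I\qquad(n\geqslant2,\ i\neq j\in\underline n), \] understood homological degree by homological degree. Then for every $n\geqslant1$, each of the two elements \[ \sum_{\substack{I\sqcup J=\underline n\\ j\in J}}\overline{\mathsf m}_I\overline{\mathsf m}_J,\qquad \sum_{\substack{I\sqcup J=\underline n\\ j\in J}}\overline{\mathsf m}_J\overline{\mathsf m}_I \] (sums over decompositions into nonempty $I,J$, taken degree by degree) is independent of the choice of $j\in\underline n$.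
   Context: Work over a field $\Bbbk$ of characteristic zero, homologically graded vector spaces; $\underline n=\{1,\dots,n\}$. A twisted associative algebra is a species with natural associative unital products $\mathcal A(J)\otimes\mathcal A(K)\to\mathcal A(J\sqcup K)$; $\mathsf x_I$ is the relabeling of an $S_t$-invariant element of arity $t$ to a $t$-element set $I$; relations are imposed with all relabelings. Since $\overline{\mathsf m}_t$ is an infinite sum of elements of different degrees, each identity involving these sums is to be read as the family of identities obtained by separating the terms by total homological degree (each involving finitely many terms). *)

From mathcomp Require Import all_boot all_order all_algebra.
Set Implicit Arguments. Unset Strict Implicit. Unset Printing Implicit Defensive.
Import GRing.Theory.
Local Open Scope ring_scope.

(* Model of the free twisted associative algebra on the S_t-invariant
   generators m^{2p}_t, evaluated on the finite set 'I_n (= {0,..,n-1},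
   standing for the set underline n = {1,..,n}) and on its subsets.
   A basis monomial m^{2p_1}_{I_1} ... m^{2p_k}_{I_k} is a word: the list of
   pairs (I_l, p_l).  Elements of the free algebra are given by their
   coefficient functions on words (all elements occurring are finitely
   supported), with product the concatenation (convolution) product. *)

Definition word (n : nat) := seq ({set 'I_n} * nat).

Section FreeTAA.
Variables (F : fieldType) (n : nat).

Definition elt := word n -> F.

Definition mono (s : word n) : elt := fun w => (w == s)%:R.

Definition eadd (x y : elt) : elt := fun w => x w + y w.
Definition esub (x y : elt) : elt := fun w => x w - y w.
Definition escale (c : F) (x : elt) : elt := fun w => c * x w.
Definition ezero : elt := fun _ => 0.

Definition emul (x y : elt) : elt :=
  fun w => \sum_(i < (size w).+1) x (take i w) * y (drop i w).

(* a word w is a monomial of arity S: its blocks are nonempty, pairwise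
   disjoint and cover S *)
Definition wordon (S : {set 'I_n}) (w : word n) : bool :=
  all (fun b => b.1 != set0) w &&
  ((\sum_(b <- w) #|b.1|)%N == #|S|) &&
  (\bigcup_(b <- w) b.1 == S).

(* homogeneous component (half homological degree d, i.e. homological degree
   2d) of  sum_{N = I u J, i in I, j in J} (mbar_I mbar_J - mbar_J mbar_I),
   the defining relation relabeled to the subset N. *)
Definition rel (N : {set 'I_n}) (i j : 'I_n) (d : nat) : elt :=
  fun w => \sum_(I : {set 'I_n}) \sum_(J : {set 'I_n})
     if [&& I :|: J == N, [disjoint I & J], i \in I & j \in J] then
       \sum_(p < d.+1)
         esub (emul (mono [:: (I, val p)]) (mono [:: (J, (d - p)%N)]))
              (emul (mono [:: (J, (d - p)%N)]) (mono [:: (I, val p)])) w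
     else 0.

(* a generator of the two-sided ideal in arity 'I_n:  u . r . v  with u a
   monomial of arity K1, r a relation of arity N, v a monomial of arity K2,
   and K1, N, K2 a decomposition of 'I_n *)
Definition ideal_gen (u : word n) (N : {set 'I_n}) (i j : 'I_n) (d : nat)
  (v : word n) : Prop :=
  (i != j) /\ i \in N /\ j \in N /\
  exists K1 K2 : {set 'I_n},
    [/\ wordon K1 u, wordon K2 v, [disjoint K1 & N], [disjoint K2 & N]
        & [disjoint K1 & K2]] /\ K1 :|: N :|: K2 = setT.

Definition in_ideal (x : elt) : Prop :=
  exists l : seq (F * word n * {set 'I_n} * 'I_n * 'I_n * nat * word n),
    (forall t, t \in l ->
       let: (c, u, N, i, j, d, v) := t in ideal_gen u N i j d v) /\
    forall w, x w = \sum_(t <- l)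
       let: (c, u, N, i, j, d, v) := t in
       escale c (emul (emul (mono u) (rel N i j d)) (mono v)) w.

Definition Xelt (j : 'I_n) (d : nat) : elt :=
  fun w => \sum_(I : {set 'I_n}) \sum_(J : {set 'I_n})
     if [&& I :|: J == setT, [disjoint I & J], I != set0 & j \in J] then
       \sum_(p < d.+1) emul (mono [:: (I, val p)]) (mono [:: (J, (d - p)%N)]) w
     else 0.

Definition Yelt (j : 'I_n) (d : nat) : elt :=
  fun w => \sum_(I : {set 'I_n}) \sum_(J : {set 'I_n})
     if [&& I :|: J == setT, [disjoint I & J], I != set0 & j \in J] then
       \sum_(p < d.+1) emul (mono [:: (J, (d - p)%N)]) (mono [:: (I, val p)]) w
     else 0.

End FreeTAA.

From Pilot Require Import Defs.
From mathcomp Require Import all_boot all_order all_algebra.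
Set Implicit Arguments. Unset Strict Implicit. Unset Printing Implicit Defensive.
Import GRing.Theory.
Local Open Scope ring_scope.

(* For a decomposition [I :|: J = setT] into disjoint blocks, J is the
   complement of I, so the conditions "I nonempty, j in J" and "I nonempty,
   k in J" differ only on the decompositions separating j and k.  Hence, degree
   by degree, the difference of the sums for j and for k is the sum of
   mbar_I mbar_J - mbar_J mbar_I over the decompositions with k in I and j in J
   (with j in I and k in J for the second element): a single defining
   relation. *)

Section TwistedHyperCommutative.
Variables (F : fieldType) (n : nat).
Implicit Types (I J N : {set 'I_n}) (w : word n) (x y : elt F n).

Lemma emul_mono_nil_l x w : emul (mono F [::]) x w = x w.
Proof.
rewrite /emul big_ord_recl take0 drop0 /mono eqxx mul1r big1 ?addr0 //.
by case: w => [|a w] i _; [case: i | rewrite mul0r].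
Qed.

Lemma emul_mono_nil_r x w : emul x (mono F [::]) w = x w.
Proof.
rewrite /emul big_ord_recr /= take_size drop_size /mono eqxx mulr1.
rewrite big1 ?add0r // => i _.
suff /negPf -> : drop i w != [::] by rewrite mulr0.
by rewrite -size_eq0 size_drop subn_eq0 -ltnNge ltn_ord.
Qed.

Lemma eq_in_ideal x y : x =1 y -> in_ideal y -> in_ideal x.
Proof. by move=> exy [l [gen_l ey]]; exists l; split=> // w; rewrite exy. Qed.

Lemma in_ideal0 : in_ideal (@ezero F n).
Proof. by exists [::]; split=> // w; rewrite big_nil. Qed.

Lemma in_ideal_rel i j d : i != j -> in_ideal (Defs.rel F [set: 'I_n] i j d).
Proof.
move=> neq_ij; exists [:: (1, [::], setT, i, j, d, [::])]; split.
  move=> t /[!inE] /eqP -> /=; do 3!(split; rewrite ?in_setT //).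
  exists set0, set0; rewrite !set0U setU0; split=> //.
  by split; rewrite ?disjoints_subset ?sub0set // /wordon !big_nil cards0 !eqxx.
by move=> w; rewrite big_seq1 /escale mul1r emul_mono_nil_r emul_mono_nil_l.
Qed.

Definition split_sum N (P : {set 'I_n} -> {set 'I_n} -> bool)
    (f : {set 'I_n} -> {set 'I_n} -> F) : F :=
  \sum_I \sum_J (if [&& I :|: J == N, [disjoint I & J] & P I J]
                 then f I J else 0).

Lemma split_sumB N P f g :
  split_sum N P f - split_sum N P g = split_sum N P (fun I J => f I J - g I J).
Proof.
rewrite -sumrB; apply: eq_bigr => I _; rewrite -sumrB; apply: eq_bigr => J _.
by case: ifP; rewrite ?subr0.
Qed.

Lemma split_sum_swap N a b f :
  split_sum N (fun I J => (a \in I) && (b \in J)) (fun I J => f J I) =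
  split_sum N (fun I J => (b \in I) && (a \in J)) f.
Proof.
rewrite /split_sum exchange_big; apply: eq_bigr => I _; apply: eq_bigr => J _.
by rewrite setUC disjoint_sym (andbC (a \in J)).
Qed.

Lemma split_setT_compl I J :
  I :|: J = setT -> [disjoint I & J] -> J = ~: I.
Proof.
move=> cover disj; apply/setP => x; rewrite inE.
have /setP/(_ x) := cover; have /setP/(_ x) := disjoint_setI0 disj.
by rewrite !inE; case: (x \in I); case: (x \in J).
Qed.

Lemma split_sum_pivot j k f :
  split_sum setT (fun I J => (I != set0) && (j \in J)) f
  - split_sum setT (fun I J => (I != set0) && (k \in J)) f =
  split_sum setT (fun I J => (k \in I) && (j \in J)) f
  - split_sum setT (fun I J => (j \in I) && (k \in J)) f.
Proof.
rewrite /split_sum -!sumrB; apply: eq_bigr => I _; rewrite -!sumrB.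
apply: eq_bigr => J _.
have [cover|] := eqVneq (I :|: J) setT; last by rewrite /= !subrr.
have [disj|] := boolP [disjoint I & J]; last by rewrite /= !subrr.
have nonempty z : z \in I -> I != set0 by move=> zI; apply/set0Pn; exists z.
rewrite /= (split_setT_compl cover disj) !inE.
case jI: (j \in I); case kI: (k \in I);
  by rewrite /= ?(nonempty j jI) ?(nonempty k kI) ?andbF ?subrr ?subr0 ?sub0r.
Qed.

Definition mbar_prod d I J : elt F n :=
  fun w =>
    \sum_(p < d.+1) emul (mono F [:: (I, val p)]) (mono F [:: (J, d - p)%N]) w.

Lemma mbar_prod_rev d I J w :
  \sum_(p < d.+1) emul (mono F [:: (J, d - p)%N]) (mono F [:: (I, val p)]) w =
  mbar_prod d J I w.
Proof.
rewrite /mbar_prod (reindex_inj rev_ord_inj); apply: eq_bigr => p _ /=.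
by rewrite subSS subKn // -ltnS.
Qed.

Lemma Xelt_split_sum j d w :
  Xelt F j d w =
  split_sum setT (fun I J => (I != set0) && (j \in J))
    (fun I J => mbar_prod d I J w).
Proof. by []. Qed.

Lemma Yelt_split_sum j d w :
  Yelt F j d w =
  split_sum setT (fun I J => (I != set0) && (j \in J))
    (fun I J => mbar_prod d J I w).
Proof. by apply: eq_bigr => I _; apply: eq_bigr => J _; rewrite mbar_prod_rev. Qed.

Lemma rel_split_sum N i j d w :
  Defs.rel F N i j d w =
  split_sum N (fun I J => (i \in I) && (j \in J))
    (fun I J => mbar_prod d I J w - mbar_prod d J I w).
Proof.
apply: eq_bigr => I _; apply: eq_bigr => J _; case: ifP => // _.
by rewrite /esub sumrB mbar_prod_rev.
Qed.

Lemma Xelt_sub j k d :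
  esub (Xelt F j d) (Xelt F k d) =1 Defs.rel F [set: 'I_n] k j d.
Proof.
move=> w; rewrite /esub !Xelt_split_sum split_sum_pivot rel_split_sum.
by rewrite -(split_sum_swap _ k j) split_sumB.
Qed.

Lemma Yelt_sub j k d :
  esub (Yelt F j d) (Yelt F k d) =1 Defs.rel F [set: 'I_n] j k d.
Proof.
move=> w; rewrite /esub !Yelt_split_sum split_sum_pivot rel_split_sum.
by rewrite -(split_sum_swap _ j k) split_sumB.
Qed.

End TwistedHyperCommutative.

Theorem mainTheorem19 (F : fieldType) (hF : [pchar F]%R =i pred0)
  (n : nat) (hn : (1 <= n)%N) (j k : 'I_n) (d : nat) :
  in_ideal (esub (@Xelt F n j d) (@Xelt F n k d)) /\
  in_ideal (esub (@Yelt F n j d) (@Yelt F n k d)).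
Proof.
have [<-|neq_jk] := eqVneq j k.
  by split; apply: eq_in_ideal (in_ideal0 F n) => w; rewrite /esub subrr.
have neq_kj : k != j by rewrite eq_sym.
split.
- exact: eq_in_ideal (Xelt_sub F j k d) (in_ideal_rel F d neq_kj).
- exact: eq_in_ideal (Yelt_sub F j k d) (in_ideal_rel F d neq_jk).
Qed.
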